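(* Let $n\ge2$ and consider $\mathbb R^n\times\bigwedge^2(\mathbb R^n)$ with an adequate scalar product and induced norm $\lVert\cdot\rVert_{\mathrm{eu}}$. There exists a constant $K_1$ such that for every $(n-1)$-tuple $(x_1,\dots,x_{n-1})$ of points of $\mathbb R^n$, every $Y\in\bigwedge^2(\mathbb R^n)$ and every $\varepsilon>0$ with $\mathrm{MinHeight}(x_1,\dots,x_{n-1})\ge\varepsilon$, there exist $v_1,\dots,v_{n-1}\in\mathbb R^n$ such that $$Y=\sum_{j=1}^{n-1}x_j\wedge v_j\quad\text{and}\quad \lVert v_j\rVert_{\mathrm{eu}}\le K_1\frac{\lVert Y\rVert_{\mathrm{eu}}}{\varepsilon}\ \text{for every } j\in\{1,\dots,n-1\}.$$
   Context: $v\wedge w:=v\otimes w-w\otimes v$, and $\bigwedge^2(\mathbb R^n)$ is the span of such tensors. A scalar product on $\mathbb R^n\times\bigwedge^2(\mathbb R^n)$ is adequate if $\mathbb R^n\perp\bigwedge^2(\mathbb R^n)$ and $\langle v_1\wedge w_1,v_2\wedge w_2\rangle=\langle v_1,v_2\rangle\langle w_1,w_2\rangle-\langle v_1,w_2\rangle\langle w_1,v_2\rangle$. $\mathrm{MinHeight}(a_1,\dots,a_m):=\min_j d_{\mathrm{eu}}(a_j,\mathrm{span}(a_1,\dots,\widehat a_j,\dots,a_m))$, where $\widehat a_j$ means $a_j$ is omitted and $d_{\mathrm{eu}}$ is the distance from $\lVert\cdot\rVert_{\mathrm{eu}}$ on $\mathbb R^n$. *)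

From HB Require Import structures.
From mathcomp Require Import all_boot all_order all_algebra.
From mathcomp Require Import boolp classical_sets reals.
Set Implicit Arguments. Unset Strict Implicit. Unset Printing Implicit Defensive.
Import Order.TTheory GRing.Theory Num.Theory.
Local Open Scope ring_scope.
Local Open Scope classical_set_scope.

(* Vectors of R^n are row vectors; R^n (x) R^n is identified with n x n
   matrices via  v (x) w  |->  v^T w  (entry (i,j) = v_i w_j). *)
Definition wedge (R : realType) (n : nat) (v w : 'rV[R]_n) : 'M[R]_n :=
  v^T *m w - w^T *m v.

Definition Lambda2 (R : realType) (n : nat) (Y : 'M[R]_n) : Prop :=
  exists (m : nat) (a b : 'I_m -> 'rV[R]_n), Y = \sum_(i < m) wedge (a i) (b i).

(* Elements of R^n x Lambda^2(R^n) are pairs (x, Y) with Lambda2 Y. *)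
Definition inV (R : realType) (n : nat) (u : 'rV[R]_n * 'M[R]_n) : Prop :=
  Lambda2 u.2.

Definition padd (R : realType) (n : nat) (u v : 'rV[R]_n * 'M[R]_n) :=
  (u.1 + v.1, u.2 + v.2).
Definition pscale (R : realType) (n : nat) (a : R) (u : 'rV[R]_n * 'M[R]_n) :=
  (a *: u.1, a *: u.2).

Definition adequate (R : realType) (n : nat)
    (sp : 'rV[R]_n * 'M[R]_n -> 'rV[R]_n * 'M[R]_n -> R) : Prop :=
  [/\ (forall u v, inV u -> inV v -> sp u v = sp v u),
      (forall a u v w, inV u -> inV v -> inV w ->
          sp (padd (pscale a u) v) w = a * sp u w + sp v w),
      (forall u, inV u -> u != (0, 0) -> 0 < sp u u),
      (forall x Y, Lambda2 Y -> sp (x, 0) (0, Y) = 0) &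
      (forall v1 w1 v2 w2 : 'rV[R]_n,
          sp (0, wedge v1 w1) (0, wedge v2 w2) =
          sp (v1, 0) (v2, 0) * sp (w1, 0) (w2, 0)
          - sp (v1, 0) (w2, 0) * sp (w1, 0) (v2, 0))].

Definition normeu (R : realType) (n : nat)
    (sp : 'rV[R]_n * 'M[R]_n -> 'rV[R]_n * 'M[R]_n -> R)
    (u : 'rV[R]_n * 'M[R]_n) : R := Num.sqrt (sp u u).

Definition dist_eu (R : realType) (n : nat)
    (sp : 'rV[R]_n * 'M[R]_n -> 'rV[R]_n * 'M[R]_n -> R)
    (a : 'rV[R]_n) (S : set 'rV[R]_n) : R :=
  inf [set normeu sp (a - s, 0) | s in S].

Definition span_omit (R : realType) (n m : nat) (a : 'I_m -> 'rV[R]_n) (j : 'I_m)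
  : set 'rV[R]_n :=
  [set s | exists c : 'I_m -> R, s = \sum_(i < m | i != j) c i *: a i].

(* MinHeight(a_1,...,a_m) = min_j d_eu(a_j, span of the others);
   the min over the finite index set is written as an inf. *)
Definition MinHeight (R : realType) (n m : nat)
    (sp : 'rV[R]_n * 'M[R]_n -> 'rV[R]_n * 'M[R]_n -> R)
    (a : 'I_m -> 'rV[R]_n) : R :=
  inf [set dist_eu sp (a j) (span_omit a j) | j in [set: 'I_m]].

(* Since every height is at least eps > 0, the x_j are linearly independent, so their Gram
   matrix is invertible; it yields the dual family y_j in span(x) (<y_j, x_i> = delta_ij) and
   the orthogonal projection P z = sum_j <z, y_j> x_j onto span(x). For a /\ b put
   u_j = i_{y_j}(a /\ b) = <a, y_j> b - <b, y_j> a. Then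
   sum_j x_j /\ (u_j - P u_j / 2) = a /\ b - (a - Pa) /\ (b - Pb), and the last wedge vanishes
   because span(x) has codimension at most one; summing over a representation of Y gives the
   v_j. The bound holds with K1 = 1: |v_j| <= |u_j| <= |y_j| |Y| by Cauchy-Schwarz in
   Lambda^2 against y_j /\ u_j, and writing y_j = c (x_j - s) with s in the span of the other
   x_i, |y_j|^2 = c <y_j, x_j - s> = c while |y_j|^2 = c^2 |x_j - s|^2 >= c^2 eps^2, so
   |y_j| <= 1 / eps. *)

From HB Require Import structures.
From mathcomp Require Import all_boot all_order all_algebra.
From mathcomp Require Import boolp classical_sets reals.
From mathcomp Require Import ring lra.
Import Order.TTheory GRing.Theory Num.Theory.
Set Implicit Arguments. Unset Strict Implicit. Unset Printing Implicit Defensive.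
Local Open Scope ring_scope.

Section Wedge.
Variables (R : realType) (n : nat).
Implicit Types (u w : 'rV[R]_n) (Y Z : 'M[R]_n).

Lemma wedgeE u w i j : wedge u w i j = u 0 i * w 0 j - w 0 i * u 0 j.
Proof. by rewrite !mxE !big_ord1 !mxE. Qed.

Lemma wedgeZl a u w : wedge (a *: u) w = a *: wedge u w.
Proof. by apply/matrixP => i j; rewrite !(wedgeE, mxE); ring. Qed.

Lemma wedgeDl u v w : wedge (u + v) w = wedge u w + wedge v w.
Proof. by apply/matrixP => i j; rewrite !(wedgeE, mxE); ring. Qed.

Lemma wedgeDr u v w : wedge w (u + v) = wedge w u + wedge w v.
Proof. by apply/matrixP => i j; rewrite !(wedgeE, mxE); ring. Qed.

Lemma wedge0l w : wedge 0 w = 0.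
Proof. by apply/matrixP => i j; rewrite !(wedgeE, mxE); ring. Qed.

Lemma wedge0r w : wedge w 0 = 0.
Proof. by apply/matrixP => i j; rewrite !(wedgeE, mxE); ring. Qed.

Lemma wedge_suml I (r : seq I) (P : pred I) (F : I -> 'rV[R]_n) w :
  wedge (\sum_(i <- r | P i) F i) w = \sum_(i <- r | P i) wedge (F i) w.
Proof. exact: (big_morph (fun u => wedge u w) (fun u v => wedgeDl u v w) (wedge0l w)). Qed.

Lemma wedge_sumr I (r : seq I) (P : pred I) (F : I -> 'rV[R]_n) w :
  wedge w (\sum_(i <- r | P i) F i) = \sum_(i <- r | P i) wedge w (F i).
Proof. exact: (big_morph (fun u => wedge w u) (fun u v => wedgeDr u v w) (wedge0r w)). Qed.

Lemma wedge_eq0_of_rel a b u w :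
  a *: u + b *: w = 0 -> (a != 0) || (b != 0) -> wedge u w = 0.
Proof.
move=> rel ab; have ruw k : a * u 0 k + b * w 0 k = 0.
  by have := congr1 (fun z : 'rV_n => z 0 k) rel; rewrite !mxE.
apply/matrixP => i j; rewrite wedgeE mxE.
have aW : a * (u 0 i * w 0 j - w 0 i * u 0 j) = 0.
  transitivity ((a * u 0 i + b * w 0 i) * w 0 j - w 0 i * (a * u 0 j + b * w 0 j)).
    by ring.
  by rewrite !ruw; ring.
have bW : b * (u 0 i * w 0 j - w 0 i * u 0 j) = 0.
  transitivity (u 0 i * (a * u 0 j + b * w 0 j) - (a * u 0 i + b * w 0 i) * u 0 j).
    by ring.
  by rewrite !ruw; ring.
by case/orP: ab => /mulfI; apply; rewrite mulr0.
Qed.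

Lemma Lambda2_0 : Lambda2 (0 : 'M[R]_n).
Proof. by exists 0%N, (fun _ => 0), (fun _ => 0); rewrite big_ord0. Qed.

Lemma Lambda2_wedge u w : Lambda2 (wedge u w).
Proof. by exists 1%N, (fun _ => u), (fun _ => w); rewrite big_ord1. Qed.

Lemma Lambda2D Y Z : Lambda2 Y -> Lambda2 Z -> Lambda2 (Y + Z).
Proof.
move=> [p [a [b ->]]] [q [c [d ->]]].
pose cat (f : 'I_p -> 'rV[R]_n) (g : 'I_q -> 'rV[R]_n) i :=
  match split i with inl k => f k | inr k => g k end.
exists (p + q)%N, (cat a c), (cat b d); rewrite big_split_ord /=.
congr (_ + _); apply: eq_bigr => i _.
  by rewrite /cat -[lshift _ _]/(unsplit (inl i)) unsplitK.
by rewrite /cat -[rshift _ _]/(unsplit (inr i)) unsplitK.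
Qed.

Lemma Lambda2Z a Y : Lambda2 Y -> Lambda2 (a *: Y).
Proof.
move=> [p [b [c ->]]]; exists p, (fun i => a *: b i), c.
by rewrite scaler_sumr; apply: eq_bigr => i _; rewrite wedgeZl.
Qed.

Lemma Lambda2_sum I (r : seq I) (P : pred I) (F : I -> 'M[R]_n) :
  (forall i, Lambda2 (F i)) -> Lambda2 (\sum_(i <- r | P i) F i).
Proof.
move=> LF; elim: r => [|i r IH]; first by rewrite big_nil; exact: Lambda2_0.
by rewrite big_cons; case: (P i) => //; exact: Lambda2D.
Qed.

End Wedge.

Arguments Lambda2_0 {R n}.

Section InnerProduct.
Variables (R : realType) (n : nat).
Variable sp : 'rV[R]_n * 'M[R]_n -> 'rV[R]_n * 'M[R]_n -> R.
Hypothesis sp_adequate : adequate sp.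
Implicit Types (t u v w : 'rV[R]_n) (Y Z W : 'M[R]_n).

Definition ip u w := sp (u, 0) (w, 0).
Definition ip2 Y Z := sp (0, Y) (0, Z).

Lemma ip_sym u w : ip u w = ip w u.
Proof. by case: sp_adequate => sym _ _ _ _; apply: sym; exact: Lambda2_0. Qed.

Lemma ipDZl a u v w : ip (a *: u + v) w = a * ip u w + ip v w.
Proof.
case: sp_adequate => _ lin _ _ _.
by have := lin a (u, 0) (v, 0) (w, 0) Lambda2_0 Lambda2_0 Lambda2_0; rewrite /padd /pscale /= scaler0 addr0.
Qed.

Lemma ip0l w : ip 0 w = 0.
Proof. by have := ipDZl 1 0 0 w; rewrite scaler0 addr0 mul1r; lra. Qed.

Lemma ipZl a u w : ip (a *: u) w = a * ip u w.
Proof. by rewrite -[a *: u]addr0 ipDZl ip0l addr0. Qed.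

Lemma ipDl u v w : ip (u + v) w = ip u w + ip v w.
Proof. by rewrite -[u]scale1r ipDZl scale1r mul1r. Qed.

Lemma ipBl u v w : ip (u - v) w = ip u w - ip v w.
Proof. by rewrite -scaleN1r addrC ipDZl mulN1r addrC. Qed.

Lemma ipZr a u w : ip w (a *: u) = a * ip w u.
Proof. by rewrite ip_sym ipZl ip_sym. Qed.

Lemma ipBr u v w : ip w (u - v) = ip w u - ip w v.
Proof. by rewrite ip_sym ipBl !(ip_sym w). Qed.

Lemma ip0r w : ip w 0 = 0.
Proof. by rewrite ip_sym ip0l. Qed.

Lemma ip_suml I (r : seq I) (P : pred I) (F : I -> 'rV[R]_n) w :
  ip (\sum_(i <- r | P i) F i) w = \sum_(i <- r | P i) ip (F i) w.
Proof. exact: (big_morph (fun u => ip u w) (fun u v => ipDl u v w) (ip0l w)). Qed.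

Lemma ip_sumr I (r : seq I) (P : pred I) (F : I -> 'rV[R]_n) w :
  ip w (\sum_(i <- r | P i) F i) = \sum_(i <- r | P i) ip w (F i).
Proof. by rewrite ip_sym ip_suml; apply: eq_bigr => i _; rewrite ip_sym. Qed.

Lemma ip_ge0 u : 0 <= ip u u.
Proof.
have [->|u0] := eqVneq u 0; first by rewrite ip0l.
case: sp_adequate => _ _ pos _ _; apply/ltW/pos; first exact: Lambda2_0.
by rewrite xpair_eqE negb_and u0.
Qed.

Lemma ip_eq0 u : ip u u = 0 -> u = 0.
Proof.
have [//|u0] := eqVneq u 0; case: sp_adequate => _ _ pos _ _.
have := pos (u, 0) Lambda2_0; rewrite xpair_eqE negb_and u0 => /(_ isT).
by rewrite -/(ip u u) => /gt_eqF/eqP.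
Qed.

Lemma ip2_sym Y Z : Lambda2 Y -> Lambda2 Z -> ip2 Y Z = ip2 Z Y.
Proof. by case: sp_adequate => sym _ _ _ _ LY LZ; exact: sym. Qed.

Lemma ip2DZl a Y Z W : Lambda2 Y -> Lambda2 Z -> Lambda2 W ->
  ip2 (a *: Y + Z) W = a * ip2 Y W + ip2 Z W.
Proof.
case: sp_adequate => _ lin _ _ _ LY LZ LW.
by have := lin a (0, Y) (0, Z) (0, W) LY LZ LW; rewrite /padd /pscale /= scaler0 addr0.
Qed.

Lemma ip2_0l W : Lambda2 W -> ip2 0 W = 0.
Proof.
move=> LW; have := ip2DZl 1 Lambda2_0 Lambda2_0 LW.
by rewrite scaler0 addr0 mul1r; lra.
Qed.

Lemma ip2Zl a Y W : Lambda2 Y -> Lambda2 W -> ip2 (a *: Y) W = a * ip2 Y W.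
Proof. by move=> LY LW; rewrite -[a *: Y]addr0 ip2DZl ?ip2_0l ?addr0 //; exact: Lambda2_0. Qed.

Lemma ip2Dl Y Z W : Lambda2 Y -> Lambda2 Z -> Lambda2 W ->
  ip2 (Y + Z) W = ip2 Y W + ip2 Z W.
Proof. by move=> LY LZ LW; have := ip2DZl 1 LY LZ LW; rewrite scale1r mul1r. Qed.

Lemma ip2_suml I (r : seq I) (P : pred I) (F : I -> 'M[R]_n) W :
  (forall i, Lambda2 (F i)) -> Lambda2 W ->
  ip2 (\sum_(i <- r | P i) F i) W = \sum_(i <- r | P i) ip2 (F i) W.
Proof.
move=> LF LW; elim: r => [|i r IH]; first by rewrite !big_nil ip2_0l.
rewrite !big_cons; case: (P i) => //.
by rewrite ip2Dl ?IH //; exact: Lambda2_sum.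
Qed.

Lemma ip2_ge0 Y : Lambda2 Y -> 0 <= ip2 Y Y.
Proof.
move=> LY; have [->|Y0] := eqVneq Y 0; first by rewrite (ip2_0l Lambda2_0).
case: sp_adequate => _ _ pos _ _; apply/ltW/pos => //.
by rewrite xpair_eqE negb_and Y0 orbT.
Qed.

Lemma ip2_wedge a b c d :
  ip2 (wedge a b) (wedge c d) = ip a c * ip b d - ip a d * ip b c.
Proof. by case: sp_adequate => _ _ _ _ wedge_ip; rewrite /ip2 wedge_ip. Qed.

Definition contract t a b := ip a t *: b - ip b t *: a.

Lemma ip2_wedge_contract t a b u :
  ip2 (wedge a b) (wedge t u) = ip (contract t a b) u.
Proof. by rewrite ip2_wedge ipBl !ipZl; ring. Qed.

Lemma ip2_comb a b Y Z : Lambda2 Y -> Lambda2 Z ->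
  ip2 (a *: Y + b *: Z) (a *: Y + b *: Z)
  = a ^+ 2 * ip2 Y Y + 2 * a * b * ip2 Y Z + b ^+ 2 * ip2 Z Z.
Proof.
move=> LY LZ; have LbZ := Lambda2Z b LZ; have LW := Lambda2D (Lambda2Z a LY) LbZ.
rewrite ip2DZl // ip2Zl // (ip2_sym LY LW) (ip2_sym LZ LW).
by rewrite !ip2DZl // !ip2Zl // (ip2_sym LZ LY); ring.
Qed.

Lemma contract0 a b : contract 0 a b = 0.
Proof. by rewrite /contract !ip0r !scale0r subrr. Qed.

Lemma ip_contract_le k (A B : 'I_k -> 'rV[R]_n) t
    (u := \sum_i contract t (A i) (B i)) (Y := \sum_i wedge (A i) (B i)) :
  ip u u <= ip t t * ip2 Y Y.
Proof.
have [t0|t_neq0] := eqVneq t 0.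
  by rewrite /u t0 big1 => [|i _]; rewrite ?contract0 ?ip0l ?mul0r.
have LY : Lambda2 Y by exists k, A, B.
have LZ := Lambda2_wedge t u.
have YZ : ip2 Y (wedge t u) = ip u u.
  rewrite ip2_suml // => [|i]; last exact: Lambda2_wedge.
  by rewrite ip_suml; apply: eq_bigr => i _; rewrite ip2_wedge_contract.
have ZZ : ip2 (wedge t u) (wedge t u) = ip t t * ip u u - ip t u ^+ 2.
  by rewrite ip2_wedge (ip_sym u t) expr2.
have T_gt0 : 0 < ip t t.
  by rewrite lt_def ip_ge0 andbT; apply: contra t_neq0 => /eqP/ip_eq0 ->.
(* [0 <= |<t,t> Y - t /\ u|^2 = <t,t> (<t,t> |Y|^2 - |u|^2) - <t,u>^2] *)
have := ip2_ge0 (Lambda2D (Lambda2Z (ip t t) LY) (Lambda2Z (-1) LZ)).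
rewrite ip2_comb // YZ ZZ.
have := sqr_ge0 (ip t u); nra.
Qed.

End InnerProduct.

Definition lin_indep (R : realType) (n m : nat) (x : 'I_m -> 'rV[R]_n) :=
  forall c : 'I_m -> R, \sum_i c i *: x i = 0 -> forall i, c i = 0.

Lemma not_lin_indep_large (R : realType) (n p : nat) (f : 'I_p -> 'rV[R]_n) :
  (n < p)%N -> ~ lin_indep f.
Proof.
move=> np indep; pose A : 'M_(p, n) := \matrix_i f i.
have : kermx A != 0.
  rewrite kermx_eq0; apply/negP => /eqP rkA.
  by have := rank_leq_col A; rewrite rkA leqNgt np.
case/rowV0Pn => v /sub_kermxP vA; apply/negP/negPn/eqP/rowP => i; rewrite mxE.
apply: (indep (fun i => v 0 i)).
by rewrite -[X in _ = X]vA mulmx_sum_row; apply: eq_bigr => j _; rewrite rowK.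
Qed.

Section Dual.
Variables (R : realType) (n : nat).
Variable sp : 'rV[R]_n * 'M[R]_n -> 'rV[R]_n * 'M[R]_n -> R.
Hypothesis sp_adequate : adequate sp.
Variables (m : nat) (x : 'I_m -> 'rV[R]_n).
Hypothesis x_indep : lin_indep x.
Implicit Types (u w z : 'rV[R]_n).
Local Notation ip := (ip sp).

Definition gram : 'M[R]_m := \matrix_(i, j) ip (x i) (x j).
Definition dual j : 'rV[R]_n := row j (invmx gram *m \matrix_i x i).
Definition proj z := \sum_j ip z (dual j) *: x j.

Lemma ip_comb_x_eq0 c :
  (forall l, ip (\sum_i c i *: x i) (x l) = 0) -> forall i, c i = 0.
Proof.
move=> orth; apply/x_indep/(ip_eq0 sp_adequate).
by rewrite ip_sumr // big1 // => l _; rewrite ipZr // orth mulr0.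
Qed.

Lemma gram_unit : gram \in unitmx.
Proof.
rewrite -row_free_unit -kermx_eq0; apply/rowV0P => v /sub_kermxP vG.
apply/rowP => i; rewrite mxE; apply: (@ip_comb_x_eq0 (fun i => v 0 i)) => l.
have := congr1 (fun r : 'rV_m => r 0 l) vG; rewrite !mxE => <-.
by rewrite ip_suml //; apply: eq_bigr => k _; rewrite ipZl // !mxE.
Qed.

Lemma dual_sum j : dual j = \sum_k invmx gram j k *: x k.
Proof.
by rewrite /dual row_mul mulmx_sum_row; apply: eq_bigr => k _; rewrite rowK mxE.
Qed.

Lemma ip_dual_x j i : ip (dual j) (x i) = (j == i)%:R.
Proof.
transitivity ((invmx gram *m gram) j i); last by rewrite mulVmx ?gram_unit // mxE.
by rewrite dual_sum ip_suml // mxE; apply: eq_bigr => k _; rewrite ipZl // mxE.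
Qed.

Lemma sum_gram_dual i : \sum_j gram i j *: dual j = x i.
Proof.
have := mulmx_sum_row (row i gram) (invmx gram *m \matrix_i x i).
rewrite -row_mul mulmxA mulmxV ?gram_unit // mul1mx rowK => ->.
by apply: eq_bigr => j _; rewrite [in RHS]mxE.
Qed.

Lemma ip_proj_x z i : ip (proj z) (x i) = ip z (x i).
Proof.
rewrite ip_suml // -[in RHS](sum_gram_dual i) ip_sumr //.
by apply: eq_bigr => j _; rewrite ipZl // ipZr // mxE (ip_sym sp_adequate (x i)) mulrC.
Qed.

Lemma proj_orth z i : ip (z - proj z) (x i) = 0.
Proof. by rewrite ipBl // ip_proj_x subrr. Qed.

Lemma ip_proj_proj z : ip (proj z) (proj z) = ip z (proj z).
Proof.
rewrite {2}/proj ip_sumr // [RHS]ip_sumr //.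
by apply: eq_bigr => j _; rewrite !ipZr // ip_proj_x.
Qed.

Lemma projD u v : proj (u + v) = proj u + proj v.
Proof. by rewrite /proj -big_split; apply: eq_bigr => j _; rewrite ipDl // scalerDl. Qed.

Lemma projZ a u : proj (a *: u) = a *: proj u.
Proof. by rewrite /proj scaler_sumr; apply: eq_bigr => j _; rewrite ipZl // scalerA. Qed.

Lemma proj_sum I (r : seq I) (P : pred I) (F : I -> 'rV[R]_n) :
  proj (\sum_(i <- r | P i) F i) = \sum_(i <- r | P i) proj (F i).
Proof.
have proj0 : proj 0 = 0 by rewrite -[X in proj X](scale0r 0) projZ scale0r.
exact: (big_morph proj projD proj0).
Qed.

Definition shrink u := u - 2^-1 *: proj u.

Lemma ip_shrink_le u : ip (shrink u) (shrink u) <= ip u u.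
Proof.
rewrite /shrink !ipBl // !ipBr // !ipZl // !ipZr // (ip_sym sp_adequate (proj u) u).
by rewrite -ip_proj_proj; have := ip_ge0 sp_adequate (proj u); lra.
Qed.

Lemma shrink_sum I (r : seq I) (P : pred I) (F : I -> 'rV[R]_n) :
  shrink (\sum_(i <- r | P i) F i) = \sum_(i <- r | P i) shrink (F i).
Proof. by rewrite /shrink proj_sum scaler_sumr -sumrB. Qed.

Lemma shrink_contract t a b :
  shrink (contract sp t a b) = ip a t *: shrink b - ip b t *: shrink a.
Proof.
rewrite /shrink /contract -scaleNr projD !projZ.
by apply/rowP => k; rewrite !mxE; ring.
Qed.

Lemma sum_wedge_x_dual a w :
  \sum_j ip a (dual j) *: wedge (x j) w = wedge (proj a) w.
Proof. by rewrite /proj wedge_suml; apply: eq_bigr => j _; rewrite wedgeZl. Qed.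

Lemma wedge_orth_eq0 u w : (n <= m.+1)%N ->
  (forall i, ip u (x i) = 0) -> (forall i, ip w (x i) = 0) -> wedge u w = 0.
Proof.
move=> nm ux wx; have [//|uw_neq0] := eqVneq (wedge u w) 0; exfalso.
pose f (i : 'I_(m + 2)) := match split i with inl k => x k | inr k => [:: u; w]`_k end.
have fl k : f (lshift 2 k) = x k by rewrite /f -[lshift _ _]/(unsplit (inl k)) unsplitK.
have fr k : f (rshift m k) = [:: u; w]`_k.
  by rewrite /f -[rshift _ _]/(unsplit (inr k)) unsplitK.
apply: (@not_lin_indep_large _ _ _ f); first by rewrite addn2 ltnS.
move=> c; rewrite big_split_ord /= !big_ord_recl big_ord0 addr0 !fr /=.
under eq_bigr do rewrite fl.
set a := c (rshift m ord0); set b := c (rshift m (lift ord0 ord0)) => rel.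
have cx k : c (lshift 2 k) = 0.
  apply: (@ip_comb_x_eq0 (fun k => c (lshift 2 k))) => l.
  have := congr1 (ip^~ (x l)) rel.
  by rewrite !ipDl // !ipZl // ux wx ip0l // !mulr0 !addr0.
have /norP[/negbNE/eqP a0 /negbNE/eqP b0] : ~~ ((a != 0) || (b != 0)).
  apply: contra uw_neq0 => ab; apply/eqP/(wedge_eq0_of_rel _ ab).
  by rewrite -[RHS]rel big1 ?add0r // => k _; rewrite cx scale0r.
move=> i; case: (split_ordP i) => k ->; first exact: cx.
by case: k => [[|[|//]] k2]; [rewrite -a0 | rewrite -b0]; congr c; apply: val_inj.
Qed.

(* Without [shrink] the sum would be [wedge (proj a) b - wedge (proj b) a], which counts
   [wedge (proj a) (proj b)] twice; with it, the sum is [wedge a b] minus the wedge of the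
   components of [a] and [b] orthogonal to the [x i], and that wedge vanishes. *)
Lemma wedge_eq_sum_wedge_x a b : (n <= m.+1)%N ->
  \sum_j wedge (x j) (shrink (contract sp (dual j) a b)) = wedge a b.
Proof.
move=> nm; have orth_wedge := wedge_orth_eq0 nm (proj_orth a) (proj_orth b).
have wedge_xj j c d : wedge (x j) (c *: shrink b - d *: shrink a)
    = c *: wedge (x j) (shrink b) - d *: wedge (x j) (shrink a).
  by apply/matrixP => r s; rewrite !(wedgeE, mxE); ring.
under eq_bigr do rewrite shrink_contract wedge_xj.
rewrite sumrB !sum_wedge_x_dual -[wedge a b]subr0 -orth_wedge.
by apply/matrixP => r s; rewrite /shrink !(wedgeE, mxE); field.
Qed.

Lemma Lambda2_eq_sum_wedge_x k (A B : 'I_k -> 'rV[R]_n) : (n <= m.+1)%N ->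
  \sum_j wedge (x j) (shrink (\sum_i contract sp (dual j) (A i) (B i)))
  = \sum_i wedge (A i) (B i).
Proof.
move=> nm; under eq_bigr do rewrite shrink_sum wedge_sumr.
by rewrite exchange_big; apply: eq_bigr => i _; exact: wedge_eq_sum_wedge_x.
Qed.

End Dual.

Section Height.
Variables (R : realType) (n : nat).
Variable sp : 'rV[R]_n * 'M[R]_n -> 'rV[R]_n * 'M[R]_n -> R.
Hypothesis sp_adequate : adequate sp.
Variables (m : nat) (x : 'I_m -> 'rV[R]_n) (eps : R).
Hypothesis eps_gt0 : 0 < eps.
Hypothesis height : forall j (c : 'I_m -> R),
  eps ^+ 2 <= ip sp (x j - \sum_(i < m | i != j) c i *: x i)
                    (x j - \sum_(i < m | i != j) c i *: x i).
Local Notation ip := (ip sp).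

Lemma coef_height_le c j :
  c j ^+ 2 * eps ^+ 2 <= ip (\sum_k c k *: x k) (\sum_k c k *: x k).
Proof.
have [->|cj_neq0] := eqVneq (c j) 0; first by rewrite expr0n mul0r ip_ge0.
have -> : \sum_k c k *: x k
    = c j *: (x j - \sum_(i < m | i != j) (- c i / c j) *: x i).
  rewrite (bigD1 j) //= scalerBr scaler_sumr -sumrN; congr (_ + _).
  by apply: eq_bigr => i _; rewrite scalerA -scaleNr; congr (_ *: _); field.
rewrite ipZl // ipZr // mulrA -expr2.
by apply: ler_wpM2l; [exact: sqr_ge0 | exact: height].
Qed.

Lemma lin_indep_of_height : lin_indep x.
Proof.
move=> c sum0 j; have := coef_height_le c j; rewrite sum0 ip0l // => le0.
have : c j ^+ 2 * eps ^+ 2 == 0 by rewrite eq_le le0 mulr_ge0 ?sqr_ge0.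
by rewrite mulf_eq0 !expf_eq0 /= (gt_eqF eps_gt0) orbF => /eqP.
Qed.

Local Notation dual := (dual sp x).

Lemma dual_norm_le j : eps ^+ 2 * ip (dual j) (dual j) <= 1.
Proof.
have x_indep := lin_indep_of_height.
have dual_dual : ip (dual j) (dual j) = invmx (gram sp x) j j.
  rewrite [X in ip X _]dual_sum ip_suml // (bigD1 j) //= big1 => [|i ij].
    by rewrite addr0 ipZl // (ip_sym sp_adequate) ip_dual_x // eqxx mulr1.
  by rewrite ipZl // (ip_sym sp_adequate) ip_dual_x // eq_sym (negPf ij) mulr0.
have := coef_height_le (fun k => invmx (gram sp x) j k) j.
have := ip_ge0 sp_adequate (dual j).
by rewrite -dual_sum dual_dual; nra.
Qed.

Lemma ip_shrink_contract_le k (A B : 'I_k -> 'rV[R]_n) j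
    (u := \sum_i contract sp (dual j) (A i) (B i)) (Y := \sum_i wedge (A i) (B i)) :
  ip (shrink sp x u) (shrink sp x u) * eps ^+ 2 <= ip2 sp Y Y.
Proof.
have := ip_shrink_le sp_adequate lin_indep_of_height u.
have : ip u u <= ip (dual j) (dual j) * ip2 sp Y Y.
  exact: (ip_contract_le sp_adequate A B (dual j)).
have := dual_norm_le j.
have : 0 <= ip2 sp Y Y by apply: ip2_ge0 => //; exists k, A, B.
nra.
Qed.

End Height.

Lemma sqrt_le_div (R : realType) (a b e : R) :
  0 < e -> a * e ^+ 2 <= b -> Num.sqrt a <= Num.sqrt b / e.
Proof.
move=> e_gt0 le_ab; rewrite ler_pdivlMr // -[e in _ * e]gtr0_norm // -sqrtr_sqr.
by rewrite mulrC -sqrtrM ?sqr_ge0 // ler_wsqrtr // mulrC.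
Qed.

Section MinHeight.
Variables (R : realType) (n : nat).
Variable sp : 'rV[R]_n * 'M[R]_n -> 'rV[R]_n * 'M[R]_n -> R.

Lemma dist_eu_le a (S : set 'rV[R]_n) s : S s -> dist_eu sp a S <= normeu sp (a - s, 0).
Proof.
move=> Ss; apply: ge_inf; last by exists s.
by exists 0 => _ [t _ <-]; exact: sqrtr_ge0.
Qed.

Lemma dist_eu_ge0 a (S : set 'rV[R]_n) s : S s -> 0 <= dist_eu sp a S.
Proof.
move=> Ss; apply: lb_le_inf; first by exists (normeu sp (a - s, 0)), s.
by move=> _ [t _ <-]; exact: sqrtr_ge0.
Qed.

Hypothesis sp_adequate : adequate sp.

Lemma height_of_MinHeight m (x : 'I_m -> 'rV[R]_n) eps :
  0 < eps -> eps <= MinHeight sp x -> forall j (c : 'I_m -> R),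
  eps ^+ 2 <= ip sp (x j - \sum_(i < m | i != j) c i *: x i)
                    (x j - \sum_(i < m | i != j) c i *: x i).
Proof.
move=> eps_gt0 eps_le j c; set d := x j - _.
have omit0 l : span_omit x l (\sum_(i < m | i != l) 0 *: x i) by exists (fun=> 0).
have MinHeight_le : MinHeight sp x <= dist_eu sp (x j) (span_omit x j).
  apply: ge_inf; last by exists j.
  by exists 0 => _ [l _ <-]; exact: dist_eu_ge0 (omit0 l).
have dist_le : dist_eu sp (x j) (span_omit x j) <= normeu sp (d, 0).
  by apply: dist_eu_le; exists c.
have le_norm := le_trans eps_le (le_trans MinHeight_le dist_le).
rewrite -(sqr_sqrtr (ip_ge0 sp_adequate d)) !expr2.
exact: (ler_pM (ltW eps_gt0) (ltW eps_gt0) le_norm le_norm).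
Qed.

End MinHeight.

Theorem mainTheorem9 (R : realType) (n : nat)
    (sp : 'rV[R]_n * 'M[R]_n -> 'rV[R]_n * 'M[R]_n -> R) :
  (2 <= n)%N -> adequate sp ->
  exists K1 : R,
    forall (x : 'I_n.-1 -> 'rV[R]_n) (Y : 'M[R]_n) (eps : R),
      Lambda2 Y -> 0 < eps -> eps <= MinHeight sp x ->
      exists v : 'I_n.-1 -> 'rV[R]_n,
        Y = \sum_(j < n.-1) wedge (x j) (v j) /\
        forall j : 'I_n.-1, normeu sp (v j, 0) <= K1 * normeu sp (0, Y) / eps.
Proof.
move=> _ sp_adequate; exists 1 => x Y eps [k [A [B ->]]] eps_gt0 eps_le.
have height := height_of_MinHeight sp_adequate eps_gt0 eps_le.
exists (fun j => shrink sp x (\sum_i contract sp (dual sp x j) (A i) (B i))); split.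
  by rewrite Lambda2_eq_sum_wedge_x ?leqSpred //; exact: lin_indep_of_height height.
move=> j; rewrite mul1r; apply: (sqrt_le_div eps_gt0).
exact: (ip_shrink_contract_le sp_adequate eps_gt0 height A B j).
Qed.
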